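(* Let $3\le n\le k$ be integers and $g:\mathbb{N}\to\mathbb{R}$. For $j=1,\dots,n-1$ and $\mathbf{r}=(r_1,\dots,r_{n-1})$ define $$f_j(\mathbf{r})=\sum_{l=1}^{j}\mathds{1}_{\{r_l=1\}}\frac{(|\mathbf{r}|-1)!}{r_1!\cdots r_{n-1}!}\Big(\frac1k\Big)^{|\mathbf{r}|}g(r_{n-1}),$$ and for $i=1,\dots,n-1$ let $N_i=r_i+\dots+r_{n-1}$. Then for $j=1,\dots,n-2$, $$\sum_{\mathbf{r}\in E_j}f_j(\mathbf{r})=\sum_{l=1}^{j}\binom{j}{l}\frac{l}{k^l}\sum_{\substack{r_{l+1}\ge2,\dots,r_j\ge2\\ r_{j+1}\ge0,\dots,r_{n-1}\ge0}}\frac{(l-1+N_{l+1})!}{r_{l+1}!\cdots r_{n-1}!}\Big(\frac1k\Big)^{N_{l+1}}g(r_{n-1})$$ for any $g$ such that the right-hand side is finite. Moreover, this identity also holds for $j=n-1$ when $g(i)=1$ for all $i\in\mathbb{N}$, provided the right-hand side is finite.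
   Context: $\mathbb{N}=\{0,1,2,\dots\}$, $|\mathbf{r}|=r_1+\dots+r_{n-1}$, $0!=1$. For $j=1,\dots,n-1$, $E_j$ is the set of $\mathbf{r}\in\mathbb{N}^{n-1}$ such that $r_i\ge1$ for $1\le i\le j$, $r_l\ge0$ for $j+1\le l\le n-1$, and $\prod_{i=1}^{j}(r_i-1)=0$ (i.e. at least one of $r_1,\dots,r_j$ equals $1$). In the inner sum on the right, the constraint set $\{r_{l+1}\ge2,\dots,r_j\ge2\}$ is empty when $l=j$; for $j=n-1$ the constraints $r_{j+1},\dots,r_{n-1}\ge0$ are vacuous and $N_{n}=0$. *)

From HB Require Import structures.
From mathcomp Require Import all_boot all_order all_algebra.
From mathcomp Require Import all_classical all_reals all_analysis.
Set Implicit Arguments. Unset Strict Implicit. Unset Printing Implicit Defensive.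
Import Order.TTheory GRing.Theory Num.Theory.
Import numFieldNormedType.Exports.
Local Open Scope classical_set_scope.
Local Open Scope ring_scope.

(* It is the
   usual value of the sum when the family is (absolutely) summable. *)
Definition sumR (T : choiceType) (R : realType) (D : set T) (F : T -> R)
  : \bar R :=
  (\esum_(x in D) (fun y => (F y)%:E)^\+ x - \esum_(x in D) (fun y => (F y)%:E)^\- x)%E.

(* Vectors r = (r_1, ..., r_{n-1}) in N^{n-1} are sequences of length n-1;
   r_i (1-based) is  nth 0 r i.-1 ;  |r| = sumn r. *)

Definition Eset (n j : nat) : set (seq nat) :=
  [set r | size r = n.-1 /\
           (forall i, (1 <= i <= j)%N -> (1 <= nth 0 r i.-1)%N) /\
           (\prod_(1 <= i < j.+1) (nth 0 r i.-1 - 1) = 0)%N].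

Definition fj (R : realType) (n k : nat) (g : nat -> R) (j : nat)
  (r : seq nat) : R :=
  \sum_(1 <= l < j.+1)
     ((nth 0 r l.-1 == 1%N)%:R
      * (((sumn r).-1)`!%:R / (\prod_(x <- r) x`!)%:R)
      * (k%:R^-1) ^+ (sumn r)
      * g (nth 0 r (n.-1).-1)).

(* Index set of the inner sum on the right-hand side for a given l:
   s = (r_{l+1}, ..., r_{n-1}) (a sequence of length n-1-l, with
   r_i = nth 0 s (i - l.+1)), subject to r_{l+1}, ..., r_j >= 2. *)
Definition Iset (n j l : nat) : set (seq nat) :=
  [set s | size s = (n.-1 - l)%N /\
           (forall i, (l.+1 <= i <= j)%N -> (2 <= nth 0 s (i - l.+1))%N)].

Definition Iterm (R : realType) (n k : nat) (g : nat -> R) (l : nat)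
  (s : seq nat) : R :=
  ((l.-1 + sumn s)`!%:R / (\prod_(x <- s) x`!)%:R)
  * (k%:R^-1) ^+ (sumn s)
  * g (nth 0 s ((n.-1) - l.+1)).

Definition coef (R : realType) (k j l : nat) : R :=
  'C(j, l)%:R * l%:R / (k%:R ^+ l).

(* "the right-hand side is finite": every inner sum is (absolutely) finite *)
Definition rhs_finite (R : realType) (n k : nat) (g : nat -> R) (j : nat) : Prop :=
  forall l, (1 <= l <= j)%N ->
    summable (Iset n j l) (fun s => (Iterm n k g l s)%:E).

Definition identity_holds (R : realType) (n k : nat) (g : nat -> R) (j : nat) : Prop :=
  summable (Eset n j) (fun r => (fj n k g j r)%:E) /\
  sumR (Eset n j) (fj n k g j) =
  (\sum_(1 <= l < j.+1) (coef R k j l)%:E * sumR (Iset n j l) (Iterm n k g l))%E.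

From HB Require Import structures.
From mathcomp Require Import all_boot all_order all_algebra.
From mathcomp Require Import all_classical all_reals all_analysis.
From mathcomp Require Import zify ring.
Set Implicit Arguments. Unset Strict Implicit. Unset Printing Implicit Defensive.
Import Order.TTheory GRing.Theory Num.Theory.
Local Open Scope classical_set_scope.

(** Proof idea: record which of the first [j] coordinates of [r] in [E_j] equal
    [1] by a pattern [b] with [l >= 1] ones, and collect the other coordinates
    in [s]; then [r <-> (b, s)] is a bijection from [E_j] onto the pairs with
    [s] in the index set of the [l]-th inner sum.  Since [1! = 1],
    [|r| = l + N_{l+1}] and, for [j <= n-2], [r_{n-1}] is the last entry of
    [s], we get [f_j(r) = l k^-l] times the inner summand at [s].  Summing over
    the [binom(j, l)] patterns with [l] ones gives the identity for [g >= 0];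
    the general case follows by applying it to [g^+], [g^-] and [|g|].  For
    [j = n-1] the last coordinate of [r] may be one of the inserted ones, which
    is harmless only when [g] is constant. *)

Fixpoint insert_ones (b : seq bool) (s : seq nat) : seq nat :=
  if b is x :: b' then
    if x then 1 :: insert_ones b' s else head 0 s :: insert_ones b' (behead s)
  else s.

Definition split_ones (j : nat) (r : seq nat) : seq bool * seq nat :=
  ([seq x == 1 | x <- take j r], [seq x <- take j r | x != 1] ++ drop j r).

Lemma sumn_insert_ones b s : sumn (insert_ones b s) = count id b + sumn s.
Proof.
elim: b s => [|[] b IH] s //=; first by rewrite IH addnA.
by rewrite IH; case: s => [|x s] /=; lia.
Qed.

Lemma prod_fact_insert_ones b s :
  \prod_(x <- insert_ones b s) x`! = \prod_(x <- s) x`!.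
Proof.
elim: b s => [|[] b IH] s //=; rewrite big_cons IH ?mul1n //.
by case: s => [|x s]; rewrite ?big_nil ?big_cons.
Qed.

Lemma size_insert_ones b s :
  count negb b <= size s -> size (insert_ones b s) = count id b + size s.
Proof.
elim: b s => [|[] b IH] s //= hs; first by rewrite IH.
by case: s hs => [|x s] //= hs; rewrite IH ?addnS.
Qed.

Lemma count_id_negb (b : seq bool) : count id b + count negb b = size b.
Proof. exact: count_predC. Qed.

Lemma insert_ones_prefix b s :
  count negb b <= size s -> all (leq 2) (take (count negb b) s) ->
  [/\ [seq x == 1 | x <- take (size b) (insert_ones b s)] = b,
      all (leq 1) (take (size b) (insert_ones b s)),
      [seq x <- take (size b) (insert_ones b s) | x != 1] = take (count negb b) s &
      drop (size b) (insert_ones b s) = drop (count negb b) s].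
Proof.
elim: b s => [|[] b IH] s /= hs h2; first by rewrite take0 drop0.
  by have [-> -> -> ->] := IH s hs h2.
case: s hs h2 => [|x s] //= hs /andP[x2 h2].
have [-> -> -> ->] := IH s hs h2.
by rewrite (gtn_eqF x2) (ltnW x2) add0n.
Qed.

Lemma insert_onesK b s :
  count negb b <= size s -> all (leq 2) (take (count negb b) s) ->
  split_ones (size b) (insert_ones b s) = (b, s).
Proof.
move=> hs h2; have [e1 _ e3 e4] := insert_ones_prefix hs h2.
by rewrite /split_ones e1 e3 e4 cat_take_drop.
Qed.

Lemma split_onesK j r : insert_ones (split_ones j r).1 (split_ones j r).2 = r.
Proof.
rewrite /split_ones -[in RHS](cat_take_drop j r).
elim: (take j r) => [|x t IH] //=.
by case: eqP => [->|/eqP x1] /=; rewrite IH.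
Qed.

Lemma big_nth_take (R : Type) (idx : R) (op : Monoid.law idx) (F : nat -> R) j r :
  j <= size r ->
  \big[op/idx]_(1 <= l < j.+1) F (nth 0 r l.-1) = \big[op/idx]_(x <- take j r) F x.
Proof.
move=> jr; rewrite big_add1 /= [RHS](big_nth 0) size_takel //.
by apply: eq_big_nat => i /andP[_ ij]; rewrite nth_take.
Qed.

Lemma prod_subn1_eq0 (t : seq nat) :
  all (leq 1) t -> (\prod_(x <- t) (x - 1) == 0) = has (eq_op^~ 1) t.
Proof.
elim: t => [|x t IH] /=; first by rewrite big_nil.
by move=> /andP[x1 /IH <-]; rewrite big_cons muln_eq0; congr orb; lia.
Qed.

Definition one_patterns (j : nat) : set (seq bool) :=
  [set b | size b = j /\ has id b].

Definition Eset_coords (n j : nat) : set (seq bool * seq nat) :=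
  one_patterns j `*`` (fun b => Iset n j (count id b)).

Section Eset_coordinates.
Variables (n j : nat).
Hypothesis jn : j <= n.-1.

Lemma Iset_insert_ones_cond b s : size b = j -> Iset n j (count id b) s ->
  count negb b <= size s /\ all (leq 2) (take (count negb b) s).
Proof.
move=> sb [sz Is]; have cb := count_id_negb b.
split; first by rewrite sz; lia.
apply/(all_nthP 0) => i; rewrite size_take_min => hi.
rewrite nth_take; last by lia.
by have := Is (i + (count id b).+1); rewrite addnK; apply; lia.
Qed.

Lemma size_insert_ones_Iset b s : size b = j -> Iset n j (count id b) s ->
  size (insert_ones b s) = n.-1.
Proof.
move=> sb Is; have [hs _] := Iset_insert_ones_cond sb Is.
by have cb := count_id_negb b; rewrite size_insert_ones // Is.1; lia.
Qed.

Lemma Eset_insert_ones b s : one_patterns j b -> Iset n j (count id b) s ->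
  Eset n j (insert_ones b s).
Proof.
move=> [sb hb] Is; have [hs h2] := Iset_insert_ones_cond sb Is.
have [e1 e2 _ _] := insert_ones_prefix hs h2; rewrite sb in e1 e2.
have sz := size_insert_ones_Iset sb Is.
split; [done | split].
- move=> i /andP[i1 ij]; have /(all_nthP 0) := e2; move/(_ i.-1).
  by rewrite size_takel ?sz // nth_take; [apply|..]; lia.
- apply/eqP; rewrite (big_nth_take _ (fun x => x - 1)) ?sz //.
  by rewrite prod_subn1_eq0 //; rewrite -e1 has_map in hb.
Qed.

Lemma split_ones_Eset r : Eset n j r -> Eset_coords n j (split_ones j r).
Proof.
move=> [sr [r1 r0]]; rewrite /Eset_coords /one_patterns /split_ones /=.
set t := take j r.
have st : size t = j by rewrite size_takel ?sr.
have t1 : all (leq 1) t.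
  apply/(all_nthP 0) => i; rewrite st => ij; rewrite nth_take //.
  by apply: r1 i.+1 _; lia.
have cnt : count (eq_op^~ 1) t + size [seq x <- t | x != 1] = j.
  by rewrite size_filter -st; exact: count_predC.
rewrite count_map size_map; split; first split => //.
  rewrite has_map -prod_subn1_eq0 // -(big_nth_take _ (fun x => x - 1)) ?sr //.
  exact/eqP.
change (count (preim _ id) t) with (count (eq_op^~ 1) t); split.
  rewrite size_cat size_drop sr; move: cnt; set c := count _ t; set m := size _; lia.
move=> i /andP[i1 ij]; rewrite nth_cat.
have ic : i - (count (eq_op^~ 1) t).+1 < size [seq x <- t | x != 1] by lia.
rewrite ic; have := mem_nth 0 ic.
rewrite mem_filter => /andP[x1 /(allP t1)]; move: x1.
by set x := nth 0 _ _; lia.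
Qed.

Lemma Eset_coords_bij :
  set_bij (Eset_coords n j) (Eset n j) (fun p => insert_ones p.1 p.2).
Proof.
split.
- by move=> [b s] [Pb Is]; exact: Eset_insert_ones.
- move=> [b s] [b' s'] /[!inE]; rewrite /Eset_coords /one_patterns /=.
  move=> [[sb _] Is] [[sb' _] Is'] e.
  have [hs h2] := Iset_insert_ones_cond sb Is.
  have [hs' h2'] := Iset_insert_ones_cond sb' Is'.
  by rewrite -(insert_onesK hs h2) -(insert_onesK hs' h2') e sb sb'.
- by move=> r Er; exists (split_ones j r); [exact: split_ones_Eset | exact: split_onesK].
Qed.

Lemma nth_last_insert_ones b s : j < n.-1 -> size b = j ->
  Iset n j (count id b) s ->
  nth 0 (insert_ones b s) (n.-1).-1 = nth 0 s (n.-1 - (count id b).+1).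
Proof.
move=> jlt sb Is; have [hs h2] := Iset_insert_ones_cond sb Is.
have [_ _ _ e4] := insert_ones_prefix hs h2.
have cb := count_id_negb b.
have -> : (n.-1).-1 = size b + ((n.-1).-1 - j) by lia.
by rewrite -nth_drop e4 nth_drop; congr nth; lia.
Qed.

End Eset_coordinates.

Fixpoint bool_seqs (j : nat) : seq (seq bool) :=
  if j is j'.+1 then
    [seq true :: b | b <- bool_seqs j'] ++ [seq false :: b | b <- bool_seqs j']
  else [:: [::]].

Lemma mem_bool_seqs j b : (b \in bool_seqs j) = (size b == j).
Proof.
apply/idP/eqP => [|<-].
  elim: j b => [|j IH] b /=; first by rewrite inE => /eqP ->.
  by rewrite mem_cat => /orP[] /mapP[c /IH <- ->].
have consK (x : bool) : injective (cons x) by move=> ? ? [].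
elim: b => [|x b IH] //=; rewrite mem_cat.
by case: x; rewrite (mem_map (consK _)) IH ?orbT.
Qed.

Lemma bool_seqs_uniq j : uniq (bool_seqs j).
Proof.
elim: j => [|j IH] //=; rewrite cat_uniq !map_inj_uniq ?IH //;
  try by move=> x y [].
by rewrite andbT; apply/hasPn => _ /mapP[b _ ->]; apply/mapP => -[].
Qed.

Lemma sum_bool_seqs_count (V : nmodType) (F : nat -> V) j :
  (\sum_(b <- bool_seqs j) F (count id b) = \sum_(0 <= l < j.+1) F l *+ 'C(j, l))%R.
Proof.
elim: j F => [|j IH] F; first by rewrite /= big_seq1 big_nat1.
rewrite big_cat !big_map /= (IH (fun l => F l.+1)) (IH F) [RHS]big_nat_recl //.
under [in RHS]eq_bigr do rewrite binS mulrnDr.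
rewrite big_split /= addrA addrC; congr (_ + _)%R.
rewrite big_nat_recl // [in RHS]big_nat_recr //=.
by rewrite !bin0 bin_small // mulr0n addr0.
Qed.

Lemma one_patterns_seq j : one_patterns j = [set` [seq b <- bool_seqs j | has id b]].
Proof.
apply/funext => b; apply/propext; rewrite /= mem_filter mem_bool_seqs.
by split => [[-> ->]|/andP[hb /eqP]]; rewrite ?eqxx.
Qed.

Section fj_Iterm.
Local Open Scope ring_scope.
Variable R : realType.

Lemma fj_ge0 n k (g : nat -> R) j r : (forall x, 0 <= g x) -> 0 <= fj n k g j r.
Proof.
move=> g0; apply: sumr_ge0 => l _.
by rewrite !mulr_ge0 ?divr_ge0 ?exprn_ge0 ?invr_ge0.
Qed.

Lemma Iterm_ge0 n k (g : nat -> R) l s : (forall x, 0 <= g x) -> 0 <= Iterm n k g l s.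
Proof. by move=> g0; rewrite !mulr_ge0 ?divr_ge0 ?exprn_ge0 ?invr_ge0. Qed.

Lemma fj_factor n k (g : nat -> R) j r :
  fj n k g j r = fj n k (fun=> 1) j r * g (nth 0 r (n.-1).-1).
Proof. by rewrite /fj big_distrl; apply: eq_bigr => l _; rewrite mulr1. Qed.

Lemma Iterm_factor n k (g : nat -> R) l s :
  Iterm n k g l s = Iterm n k (fun=> 1) l s * g (nth 0 s (n.-1 - l.+1)).
Proof. by rewrite /Iterm mulr1. Qed.

Lemma fj_insert_ones n k (g : nat -> R) j b s :
  (j <= n.-1)%N -> one_patterns j b -> Iset n j (count id b) s ->
  g (nth 0 (insert_ones b s) (n.-1).-1) = g (nth 0 s (n.-1 - (count id b).+1)) ->
  fj n k g j (insert_ones b s) =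
  (count id b)%:R * k%:R^-1 ^+ count id b * Iterm n k g (count id b) s.
Proof.
move=> jn [sb hb] Is hg; have [hs h2] := Iset_insert_ones_cond jn sb Is.
have [e1 _ _ _] := insert_ones_prefix hs h2; rewrite sb in e1.
have sz := size_insert_ones_Iset jn sb Is.
have sum_eq1 (t : seq nat) : \sum_(x <- t) ((x == 1)%:R : R) = (count (eq_op^~ 1) t)%:R.
  by elim: t => [|x t IH]; rewrite ?big_nil // big_cons IH natrD.
rewrite /fj /Iterm -3!big_distrl /= (big_nth_take _ (fun x => (x == 1)%:R)) ?sz //.
have cnt1 : count (eq_op^~ 1) (take j (insert_ones b s)) = count id b.
  by rewrite -[in RHS]e1 count_map.
rewrite sum_eq1 cnt1 sumn_insert_ones prod_fact_insert_ones hg.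
have l0 : (0 < count id b)%N by rewrite -has_count.
have -> : ((count id b + sumn s).-1 = (count id b).-1 + sumn s)%N by lia.
by rewrite exprD; ring.
Qed.

End fj_Iterm.

Section esum_identity.
Local Open Scope ring_scope.
Local Open Scope ereal_scope.
Variable R : realType.

Lemma ge0_mule_esumr (T : choiceType) (D : set T) (x : R) (F : T -> \bar R) :
  (0 <= x)%R -> (forall t, 0 <= F t) ->
  (x%:E * (\esum_(t in D) F t) = \esum_(t in D) (x%:E * F t))%E.
Proof.
have le_esum_mule (y : R) (G : T -> \bar R) : (0 <= y)%R -> (forall t, 0 <= G t) ->
    (\esum_(t in D) (y%:E * G t) <= y%:E * \esum_(t in D) G t)%E.
  move=> y0 G0; apply: ge_ereal_sup => _ [X [finX XD] <-] /=.
  rewrite -ge0_mule_fsumr //; apply: lee_wpmul2l; first by rewrite lee_fin.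
  by apply: esum_ge; exists X.
move=> x0 F0; apply/le_anti/andP; split; last exact: le_esum_mule.
have [->|xn0] := eqVneq x 0%R.
  by rewrite mul0e; apply: esum_ge0 => t _; rewrite mul0e.
have xF0 t : 0 <= x%:E * F t by rewrite mule_ge0 ?lee_fin.
have xi0 : (0 <= x^-1)%R by rewrite invr_ge0.
have := lee_wpmul2l (_ : 0 <= x%:E) (le_esum_mule _ _ xi0 xF0).
under eq_esum do rewrite muleA -EFinM mulVf // mul1e.
by rewrite muleA -EFinM divff // mul1e lee_fin; apply.
Qed.

Lemma esum_fj_nonneg n k (g : nat -> R) j : (1 <= j <= n.-1)%N ->
  (forall x, 0 <= g x)%R -> (j < n.-1)%N \/ (forall x y, g x = g y) ->
  \esum_(r in Eset n j) (fj n k g j r)%:E =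
  \sum_(1 <= l < j.+1) (coef R k j l)%:E * \esum_(s in Iset n j l) (Iterm n k g l s)%:E.
Proof.
move=> /andP[j1 jn] g0 g_last.
pose G l := (l%:R * k%:R^-1 ^+ l)%:E * \esum_(s in Iset n j l) (Iterm n k g l s)%:E.
rewrite (reindex_esum _ _ _ _ (Eset_coords_bij jn)) /Eset_coords.
rewrite -(esum_esum (a := fun b s => (fj n k g j (insert_ones b s))%:E)); last first.
  by move=> b s _ _; rewrite lee_fin fj_ge0.
transitivity (\esum_(b in one_patterns j) G (count id b)).
  apply: eq_esum => b [sb hb]; rewrite /G ge0_mule_esumr; last 2 first.
  - by rewrite mulr_ge0 ?exprn_ge0 ?invr_ge0.
  - by move=> s; rewrite lee_fin Iterm_ge0.
  apply: eq_esum => s Is /=; rewrite fj_insert_ones ?EFinM //.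
  case: g_last => [jlt|gc]; last exact: gc.
  by rewrite (nth_last_insert_ones jn jlt sb Is).
have G_ge0 l : 0 <= G l.
  by rewrite mule_ge0 ?esum_ge0 // => s _; rewrite lee_fin Iterm_ge0.
have G00 : G 0%N = 0 by rewrite /G mul0r mul0e.
rewrite [X in esum X _]one_patterns_seq esum_fset;
  [|exact: finite_seq | by move=> b _; exact: G_ge0].
rewrite -fsbig_seq ?filter_uniq ?bool_seqs_uniq // big_filter big_mkcond /=.
transitivity (\sum_(b <- bool_seqs j) G (count id b)).
  by apply: eq_bigr => b _; rewrite has_count lt0n; case: eqP => [->|]; rewrite ?G00.
rewrite sum_bool_seqs_count [LHS]big_nat_recl // G00 mul0rn add0r big_add1.
(* the natural-number actions [*+] of the ring and of [\bar R] are convertible *)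
apply: eq_bigr => l _; rewrite -[LHS]/(G l.+1 *+ 'C(j, l.+1))%E -mule_natl.
by rewrite muleA -EFinM /coef exprVn mulrA.
Qed.

End esum_identity.

Section signed_extension.
Local Open Scope ring_scope.
Local Open Scope ereal_scope.
Variable R : realType.

Lemma funepos_EFin_mul (T : Type) (a h : T -> R) : (forall t, 0 <= a t)%R ->
  (fun t => (a t * h t)%:E)^\+ = (fun t => (a t * Num.max (h t) 0)%:E).
Proof.
move=> a0; apply/funext => t; rewrite funeposE (_ : 0 = 0%:E) //.
by rewrite -EFin_max maxr_pMr // mulr0.
Qed.

Lemma funeneg_EFin_mul (T : Type) (a h : T -> R) : (forall t, 0 <= a t)%R ->
  (fun t => (a t * h t)%:E)^\- = (fun t => (a t * Num.max (- h t) 0)%:E).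
Proof.
move=> a0; apply/funext => t; rewrite funenegE (_ : 0 = 0%:E) //.
by rewrite -EFinN -mulrN -EFin_max maxr_pMr // mulr0.
Qed.

Lemma abse_EFin_mul (a h : R) : (0 <= a)%R -> `|(a * h)%:E| = (a * `|h|)%:E.
Proof. by move=> a0; rewrite abse_EFin normrM ger0_norm. Qed.

Variables (T U : choiceType) (E : set T) (I : nat -> set U) (j : nat).
Variables (w G : T -> R) (v H : nat -> U -> R) (c : nat -> R).
Hypotheses (w_ge0 : forall t, (0 <= w t)%R) (v_ge0 : forall l u, (0 <= v l u)%R).
Hypothesis c_ge0 : forall l, (0 <= c l)%R.
Hypothesis nonneg_identity : forall F : R -> R, (forall x, 0 <= F x)%R ->
  \esum_(t in E) (w t * F (G t))%:E =
  \sum_(1 <= l < j.+1) (c l)%:E * \esum_(u in I l) (v l u * F (H l u))%:E.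
Hypothesis rhs_summable :
  forall l, (1 <= l <= j)%N -> summable (I l) (fun u => (v l u * H l u)%:E).

Let esum_v_fin_num (F : R -> R) l : (forall x, 0 <= F x <= `|x|)%R -> (1 <= l <= j)%N ->
  \esum_(u in I l) (v l u * F (H l u))%:E \is a fin_num.
Proof.
move=> F_bnd hl; have F0 x : (0 <= F x)%R by have /andP[] := F_bnd x.
rewrite ge0_fin_numE; last by apply: esum_ge0 => u _; rewrite lee_fin mulr_ge0.
apply: le_lt_trans (rhs_summable hl); apply: le_esum => u _.
by rewrite abse_EFin_mul // lee_fin ler_wpM2l //; have /andP[] := F_bnd (H l u).
Qed.

Lemma signed_summable : summable E (fun t => (w t * G t)%:E).
Proof.
rewrite /summable; under eq_esum do rewrite abse_EFin_mul //.
rewrite (@nonneg_identity (fun x => `|x|%R)) // big_nat_cond.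
apply: lte_sum_pinfty => l /andP[hl _].
rewrite -ge0_fin_numE; last first.
  by rewrite mule_ge0 ?lee_fin // esum_ge0 // => u _; rewrite lee_fin mulr_ge0.
by rewrite fin_numM // esum_v_fin_num // => x; rewrite lexx normr_ge0.
Qed.

Lemma signed_identity :
  sumR E (fun t => (w t * G t)%R) =
  \sum_(1 <= l < j.+1) (c l)%:E * sumR (I l) (fun u => (v l u * H l u)%R).
Proof.
have pos_bnd (x : R) : (0 <= Num.max x 0 <= `|x|)%R.
  by rewrite le_max lexx orbT ge_max ler_norm normr_ge0.
have neg_bnd (x : R) : (0 <= Num.max (- x) 0 <= `|x|)%R.
  by rewrite le_max lexx orbT ge_max -normrN ler_norm normr_ge0.
have pos_ge0 (x : R) : (0 <= Num.max x 0)%R by have /andP[] := pos_bnd x.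
have neg_ge0 (x : R) : (0 <= Num.max (- x) 0)%R by have /andP[] := neg_bnd x.
rewrite /sumR funepos_EFin_mul // funeneg_EFin_mul //.
rewrite (nonneg_identity pos_ge0) (nonneg_identity neg_ge0).
rewrite big_nat_cond [X in _ - X]big_nat_cond [RHS]big_nat_cond.
rewrite -fin_num_sumeN => [|l /andP[hl _]]; last first.
  by apply: fin_numM => //; apply: (esum_v_fin_num neg_bnd).
rewrite -big_split /=; apply: eq_bigr => l /andP[hl _].
rewrite funepos_EFin_mul // funeneg_EFin_mul // muleBr //.
exact/fin_num_adde_defr/(esum_v_fin_num pos_bnd).
Qed.

End signed_extension.

Local Open Scope ring_scope.

Lemma rhs_finite_identity_holds (R : realType) n k (g : nat -> R) j :
  (1 <= j <= n.-1)%N -> (j < n.-1)%N \/ (forall x y, g x = g y) ->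
  rhs_finite n k g j -> identity_holds n k g j.
Proof.
move=> jn g_last fin; rewrite /identity_holds.
have fjE : fj n k g j = fun r => fj n k (fun=> 1) j r * g (nth 0 r (n.-1).-1).
  by apply/funext => r; exact: fj_factor.
have ItE l : Iterm n k g l = fun s => Iterm n k (fun=> 1) l s * g (nth 0 s (n.-1 - l.+1)).
  by apply/funext => s; exact: Iterm_factor.
have coef_ge0 l : 0 <= coef R k j l by rewrite /coef !mulr_ge0 ?invr_ge0 ?exprn_ge0.
have nonneg (F : R -> R) : (forall x, 0 <= F x) ->
    (\esum_(r in Eset n j) (fj n k (fun=> 1) j r * F (g (nth 0 r (n.-1).-1)))%:E =
     \sum_(1 <= l < j.+1) (coef R k j l)%:E *
       \esum_(s in Iset n j l) (Iterm n k (fun=> 1) l s * F (g (nth 0 s (n.-1 - l.+1))))%:E)%E.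
  move=> F0; transitivity (\esum_(r in Eset n j) (fj n k (F \o g) j r)%:E)%E.
    by apply: eq_esum => r _; rewrite [in RHS]fj_factor.
  have Fg_last : (j < n.-1)%N \/ (forall x y, (F \o g) x = (F \o g) y).
    by case: g_last => [|g_cst]; [left | right => x y /=; rewrite (g_cst x y)].
  rewrite (esum_fj_nonneg _ jn (fun x => F0 (g x)) Fg_last).
  by apply: eq_bigr => l _; congr (_ * _)%E; apply: eq_esum => s _; rewrite [in LHS]Iterm_factor.
rewrite fjE; under eq_bigr do rewrite ItE.
have w_ge0 r : (0 : R) <= fj n k (fun=> 1) j r by rewrite fj_ge0.
have v_ge0 l s : (0 : R) <= Iterm n k (fun=> 1) l s by rewrite Iterm_ge0.
have rhs_summable l : (1 <= l <= j)%N -> summable (Iset n j l)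
    (fun s => (Iterm n k (fun=> 1) l s * g (nth 0 s (n.-1 - l.+1)))%:E).
  by move=> hl; have := fin l hl; rewrite ItE.
split; first exact: (signed_summable w_ge0 v_ge0 coef_ge0 nonneg rhs_summable).
exact: (signed_identity w_ge0 v_ge0 nonneg rhs_summable).
Qed.

Theorem lemma7p2 (R : realType) (n k : nat) :
  (3 <= n)%N -> (n <= k)%N ->
  (forall (g : nat -> R) (j : nat), (1 <= j <= n - 2)%N ->
     rhs_finite n k g j -> identity_holds n k g j) /\
  (rhs_finite n k (fun _ => 1%R : R) (n - 1) ->
     identity_holds n k (fun _ => 1%R : R) (n - 1)).
Proof.
move=> n3 _; split=> [g j /andP[j1 jn]|].
  by apply: rhs_finite_identity_holds; [rewrite j1; lia | left; lia].
by apply: rhs_finite_identity_holds; [lia | right].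
Qed.
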